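(* If $\xi<\varepsilon_{\Omega+1}$ is a limit ordinal and $\theta<\Omega$, then $\theta\le(\xi[\theta])^*\le\max\{\xi^*,\theta\}$.
   Context: $\Omega$ is the first uncountable ordinal; $\varepsilon_{\Omega+1}$ the least $\varepsilon>\Omega$ with $\omega^\varepsilon=\varepsilon$. Every $0<\xi<\varepsilon_{\Omega+1}$ has a unique $\Omega$-normal form $\xi=\Omega^{\alpha}\beta+\gamma$ with $0<\beta<\Omega$, $\gamma<\Omega^{\alpha}$. Coefficients: $C(0)=\{0\}$, $C(\Omega^\alpha\beta+\gamma)=C(\alpha)\cup C(\gamma)\cup\{\beta\}$; $\xi^*=\max C(\xi)$. For $\xi<\varepsilon_{\Omega+1}$ and $\theta<\Omega$, $\xi[\theta]$ is defined recursively on $\Omega$-normal forms: $0[\theta]=1[\theta]=0$; $(\Omega^\alpha\beta+\gamma)[\theta]=\Omega^\alpha\beta+\gamma[\theta]$ if $\gamma>0$; $(\Omega^\alpha\beta)[\theta]=\Omega^\alpha\theta$ if $\beta$ is a limit; $\Omega^{\alpha+1}[\theta]=\Omega^\alpha\theta$; $(\Omega^\alpha(\beta+1))[\theta]=\Omega^\alpha\beta+(\Omega^\alpha)[\theta]$ if $\beta>0$; $\Omega^\alpha[\theta]=\Omega^{\alpha[\theta]}$ if $\alpha$ is a limit. *)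

From HB Require Import structures.
From mathcomp Require Import all_boot all_order.
From Stdlib Require Import ClassicalEpsilon.
Set Implicit Arguments. Unset Strict Implicit. Unset Printing Implicit Defensive.
Import Order.TTheory.
Local Open Scope order_scope.

(* The first uncountable ordinal Omega, given as (the set of countable
   ordinals, i.e. the elements below Omega, as) a totally ordered type W
   with least element \bot (= 0) which is well-founded, uncountable, and all
   of whose proper initial segments are countable.  This characterizes Omega
   up to order isomorphism. *)
Definition first_uncountable {d} (W : bOrderType d) : Prop :=
  well_founded (fun x y : W => x < y)
  /\ (~ exists f : W -> nat, injective f)
  /\ (forall b : W, exists f : W -> nat,
        forall x y : W, x < b -> y < b -> f x = f y -> x = y).

(* Omega-normal-form terms:  Plus a b g  denotes  Omega^a * b + g. *)
Inductive term (W : Type) : Type :=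
| Zero : term W
| Plus : term W -> W -> term W -> term W.
Arguments Zero {W}.

Section Defs.
Context {d : Order.disp_t} {W : bOrderType d}.

Definition is_succ_of (c b : W) : Prop := c < b /\ forall e, c < e -> b <= e.
Definition succW (c : W) : W := epsilon (inhabits c) (is_succ_of c).
Definition oneW : W := succW \bot.
Definition limitW (b : W) : Prop := b <> \bot /\ ~ exists c, is_succ_of c b.
Definition predW (b : W) : W := epsilon (inhabits \bot) (fun c => is_succ_of c b).

Fixpoint ltT (x y : term W) : Prop :=
  match x, y with
  | Zero, Zero => False
  | Zero, Plus _ _ _ => True
  | Plus _ _ _, Zero => False
  | Plus a b g, Plus a' b' g' =>
      ltT a a' \/ (a = a' /\ (b < b' \/ (b = b' /\ ltT g g')))
  end.

Definition omega_pow (a : term W) : term W := Plus a oneW Zero.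

(* xi = Omega^a b + g is in Omega-normal form: 0 < b < Omega, g < Omega^a,
   a and g in normal form.  Normal-form terms are exactly the ordinals
   below epsilon_{Omega+1}. *)
Fixpoint NF (x : term W) : Prop :=
  match x with
  | Zero => True
  | Plus a b g => NF a /\ \bot < b /\ NF g /\ ltT g (omega_pow a)
  end.

Fixpoint succT (x : term W) : term W :=
  match x with
  | Zero => Plus Zero oneW Zero
  | Plus a b g =>
      match g with
      | Zero =>
          match a with
          | Zero => Plus Zero (succW b) Zero
          | Plus _ _ _ => Plus a b (Plus Zero oneW Zero)
          end
      | Plus _ _ _ => Plus a b (succT g)
      end
  end.

Definition is_limit (x : term W) : Prop :=
  x <> Zero /\ forall y, NF y -> x <> succT y.

Definition predT (x : term W) : term W :=
  epsilon (inhabits Zero) (fun y => NF y /\ x = succT y).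

Definition mono (a : term W) (t : W) : term W :=
  if t == \bot then Zero else Plus a t Zero.

Definition decP (P : Prop) : bool :=
  if excluded_middle_informative P then true else false.

(* the fundamental sequence  xi[t] *)
Fixpoint fs (t : W) (x : term W) : term W :=
  match x with
  | Zero => Zero
  | Plus a b g =>
      (* om = (Omega^a)[t] *)
      let om :=
        match a with
        | Zero => Zero
        | Plus _ _ _ =>
            if decP (is_limit a) then Plus (fs t a) oneW Zero
            else mono (predT a) t                          (* Omega^{a'+1}[t] = Omega^{a'} t *)
        end in
      match g with
      | Plus _ _ _ => Plus a b (fs t g)
      | Zero =>
          if decP (limitW b) then mono a t
          else if predW b == \bot then om
          else Plus a (predW b) om
      end
  end.

Fixpoint star (x : term W) : W :=
  match x with
  | Zero => \bot
  | Plus a b g => Order.max (star a) (Order.max b (star g))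
  end.

End Defs.

(* Each clause either keeps coefficients of xi,
   lowers them (b to its predecessor; an exponent a'+1 to a', whose
   coefficients are at most those of a'+1), inserts theta (and 1 <= b), or
   recurses into a limit exponent or into the tail, which is again a limit
   when xi is.  Hence every coefficient of xi[theta] is at most
   max(xi^*, theta).  Every branch of the recursion ends by inserting theta
   as a coefficient, unless theta = 0, where the lower bound is trivial. *)

From Pilot Require Import Defs.
From HB Require Import structures.
From mathcomp Require Import all_boot all_order.
From Stdlib Require Import Classical ClassicalEpsilon.
Import Order.TTheory.

Local Open Scope order_scope.

Section Coefficients.
Context {d : Order.disp_t} {W : bOrderType d}.
Hypothesis HW : first_uncountable W.
Implicit Types b c : W.

Lemma exists_gt c : exists e, c < e.
Proof.
apply: NNPP => no_gt; case: HW => _ [uncountable countable_segments].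
have [f f_inj] := countable_segments c.
have le_c e : e <= c by rewrite leNgt; apply/negP => ce; apply: no_gt; exists e.
apply: uncountable; exists (fun u => if u == c then 0%N else (f u).+1) => u v.
case: eqP => [->|u_neq]; case: eqP => [->|v_neq] //.
by case=> /f_inj; apply; rewrite lt_neqAle le_c andbT; apply/eqP.
Qed.

Lemma succ_exists c : exists s, is_succ_of c s.
Proof.
have [e ce] := exists_gt c; case: HW => wf _; elim/(well_founded_ind wf): e ce.
move=> e IH ce; case: (classic (exists e', c < e' /\ e' < e)) => [[e' [ce' e'e]]|].
  exact: IH e'e ce'.
move=> no_between; exists e; split=> // e' ce'.
by rewrite leNgt; apply/negP => e'e; apply: no_between; exists e'.
Qed.

Lemma succW_spec c : is_succ_of c (succW c).
Proof. exact: epsilon_spec (succ_exists c). Qed.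

Lemma is_succ_of_uniq [c b1 b2] : is_succ_of c b1 -> is_succ_of c b2 -> b1 = b2.
Proof. by move=> [cb1 le_b1] [cb2 le_b2]; apply/le_anti; rewrite le_b1 ?le_b2. Qed.

Lemma predW_spec [b] : \bot < b -> ~ limitW b -> is_succ_of (predW b) b.
Proof.
move=> b_gt0 b_nlim; apply: (epsilon_spec _ (is_succ_of^~ b)).
apply: NNPP => no_pred; apply: b_nlim.
by split=> // b0; rewrite b0 ltxx in b_gt0.
Qed.

Lemma oneW_le [b] : \bot < b -> oneW <= b.
Proof. by case: (succW_spec \bot) => _; apply. Qed.

End Coefficients.

Lemma decPP (P : Prop) : reflect P (Defs.decP P).
Proof. by rewrite /Defs.decP; case: excluded_middle_informative; constructor. Qed.

Section NormalForms.
Context {d : Order.disp_t} {W : bOrderType d}.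
Hypothesis HW : first_uncountable W.
Implicit Types (x y z a g : term W) (b : W).

Lemma ltT_trans x y z : ltT x y -> ltT y z -> ltT x z.
Proof.
elim: x y z => [|a IHa b g IHg] [|a' b' g'] [|a'' b'' g''] //=.
case=> [aa'|[<- bg]] [a'a''|[<- b'g']]; [left; exact: IHa aa' a'a''|by left|by left|].
right; split=> //; case: bg b'g' => [bb'|[<- gg']] [b'b''|[<- g'g'']].
- by left; exact: lt_trans bb' b'b''.
- by left.
- by left.
- by right; split=> //; exact: IHg gg' g'g''.
Qed.

Lemma ltT_succT y : ltT y (succT y).
Proof.
elim: y => [|a _ b [|a' b' g'] IHg] //=; last by right; split=> //; right.
by case: a => [|? ? ?] /=; right; split=> //; [left; case: (succW_spec HW b)|right].
Qed.

Lemma star_succT y : star y <= star (succT y).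
Proof.
elim: y => [|a _ b [|a' b' g'] IHg] /=; first exact: le0x.
- case: a => [|a1 b1 g1] /=; apply: le_max2 => //; apply: le_max2; rewrite ?le0x //.
  by case: (succW_spec HW b) => /ltW.
- by apply: le_max2 => //; apply: le_max2.
Qed.

Lemma succT_Plus a b g :
  a <> Zero \/ g <> Zero -> succT (Plus a b g) = Plus a b (succT g).
Proof. by case: g => [|? ? ?] //; case: a => [[]|? ? ?]. Qed.

Lemma is_limit_tail [a b g] :
  NF (Plus a b g) -> g <> Zero -> is_limit (Plus a b g) -> is_limit g.
Proof.
move=> [NFa [b_gt0 [_ g_lt]]] g_neq0 [_ not_succ]; split=> // y NFy g_succ.
have a_or_y : a <> Zero \/ y <> Zero.
  case: y NFy g_succ => [|? ? ?] _ g_succ; last by right.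
  left=> a0; move: g_lt; rewrite g_succ a0 /= ltxx; by case=> // -[_ [|[]]].
apply: (not_succ (Plus a b y)); last by rewrite succT_Plus // -g_succ.
by do ?split=> //; apply: ltT_trans (ltT_succT y) _; rewrite -g_succ.
Qed.

Lemma is_limit_exponent_neq0 [a b] :
  NF (Plus a b Zero) -> is_limit (Plus a b Zero) -> ~ limitW b -> a <> Zero.
Proof.
move=> [_ [b_gt0 _]] [_ not_succ] b_nlim a0; subst a.
have b_succ := is_succ_of_uniq (predW_spec b_gt0 b_nlim) (succW_spec HW _).
case: (eqVneq (predW b) \bot) => [pb0|pb_neq0].
  by apply: (not_succ Zero) => //; rewrite b_succ pb0.
apply: (not_succ (Plus Zero (predW b) Zero)); last by rewrite {1}b_succ.
by do ?split=> //; rewrite lt_neqAle eq_sym pb_neq0 le0x.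
Qed.

Lemma succT_predT [x] : x <> Zero -> ~ is_limit x -> succT (Defs.predT x) = x.
Proof.
move=> x_neq0 x_nlim; suff [] : NF (Defs.predT x) /\ x = succT (Defs.predT x) by [].
apply: (epsilon_spec _ (fun y => NF y /\ x = succT y)); apply: NNPP => not_succ.
by apply: x_nlim; split=> // y NFy xy; apply: not_succ; exists y.
Qed.

End NormalForms.

Section FundamentalSequences.
Context {d : Order.disp_t} {W : bOrderType d}.
Hypothesis HW : first_uncountable W.
Implicit Types (a g : term W) (b s t : W).

(* (Omega^a)[t], the value bound to [om] in the definition of [fs] *)
Definition pow_fs t a : term W :=
  match a with
  | Zero => Zero
  | Plus _ _ _ =>
      if Defs.decP (is_limit a) then Plus (fs t a) oneW Zero else mono (Defs.predT a) t
  end.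

Lemma fs_Plus_tail t a b g : g <> Zero -> fs t (Plus a b g) = Plus a b (fs t g).
Proof. by case: g. Qed.

Lemma fs_Plus_Zero t a b :
  fs t (Plus a b Zero) =
  if Defs.decP (limitW b) then mono a t
  else if predW b == \bot then pow_fs t a else Plus a (predW b) (pow_fs t a).
Proof. by []. Qed.

Lemma between_widen [t s s' y : W] :
  t <= y <= Order.max s t -> s <= s' -> t <= y <= Order.max s' t.
Proof.
by move=> /andP[-> y_le] ss' /=; apply: le_trans y_le _; apply: le_max2.
Qed.

Lemma star_Plus_between t s a b g :
  star a <= s -> b <= s -> t <= star g <= Order.max s t ->
  t <= star (Plus a b g) <= Order.max s t.
Proof.
move=> a_le b_le /andP[t_le g_le] /=; apply/andP; split.
  by rewrite !le_max t_le !orbT.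
by rewrite !ge_max g_le !le_max a_le b_le.
Qed.

Lemma star_mono_between t a : t <= star (mono a t) <= Order.max (star a) t.
Proof.
rewrite /mono; case: eqP => [->|_] /=; first by rewrite lexx le0x.
apply/andP; split; first by rewrite !le_max lexx !orbT.
by rewrite !ge_max !le_max !lexx le0x !orbT.
Qed.

Lemma star_pow_fs_between [t a] :
  a <> Zero -> (is_limit a -> t <= star (fs t a) <= Order.max (star a) t) ->
  t <= star (pow_fs t a) <= Order.max (Order.max (star a) oneW) t.
Proof.
case: a => [//|a1 b1 g1]; set a := Plus a1 b1 g1 => a_neq0 IHa.
rewrite [pow_fs t a]/=; case: decPP => [a_lim|a_nlim].
  have /andP[t_le fs_le] := IHa a_lim; apply/andP; split; first by rewrite /= le_max t_le.
  have one_le : oneW <= Order.max (Order.max (star a) oneW) t.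
    by rewrite !le_max lexx !orbT.
  rewrite /= !ge_max one_le le0x !andbT; apply: le_trans fs_le _.
  by apply: le_max2 => //; rewrite le_max lexx.
have a_succ := succT_predT a_neq0 a_nlim.
apply: between_widen (star_mono_between t (Defs.predT a)) _.
by rewrite le_max -{2}a_succ star_succT.
Qed.

Lemma star_fs_between xi t :
  NF xi -> is_limit xi -> t <= star (fs t xi) <= Order.max (star xi) t.
Proof.
elim: xi => [|a IHa b g IHg]; first by move=> _ [].
move=> NFxi xi_lim; have [NFa [b_gt0 [NFg _]]] := NFxi.
have [a_le b_le g_le] : [/\ star a <= star (Plus a b g), b <= star (Plus a b g)
                          & star g <= star (Plus a b g)].
  by split; rewrite /= !le_max lexx ?orbT.
case: (classic (g = Zero)) => [g0|g_neq0]; last first.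
  rewrite fs_Plus_tail //; apply: star_Plus_between => //.
  exact: between_widen (IHg NFg (is_limit_tail HW NFxi g_neq0 xi_lim)) g_le.
subst g; rewrite fs_Plus_Zero; case: decPP => [_|b_nlim].
  exact: between_widen (star_mono_between t a) a_le.
have a_neq0 := is_limit_exponent_neq0 HW NFxi xi_lim b_nlim.
have [pb_lt_b _] := predW_spec b_gt0 b_nlim.
have pow_between : t <= star (pow_fs t a) <= Order.max (star (Plus a b Zero)) t.
  apply: between_widen (star_pow_fs_between a_neq0 (IHa NFa)) _.
  by rewrite ge_max a_le (le_trans (oneW_le HW b_gt0) b_le).
case: eqP => _ //; apply: star_Plus_between => //.
exact: le_trans (ltW pb_lt_b) b_le.
Qed.

End FundamentalSequences.

Theorem lemma2p2 (d : Order.disp_t) (W : bOrderType d)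
  (HW : first_uncountable W) (xi : term W) (theta : W) :
  NF xi -> is_limit xi ->
  (theta <= star (fs theta xi))%O /\
  (star (fs theta xi) <= Order.max (star xi) theta)%O.
Proof. by move=> NFxi xi_lim; apply/andP; exact: star_fs_between. Qed.
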